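(* Let $k\ge1$ and consider the cycle $C_{4k}$ with consecutive vertices $u,v,w$ (so $u\sim v$ and $v\sim w$). Let $\alpha\ne0$ be real, give the edges $\{u,v\}$ and $\{v,w\}$ weight $1/\alpha$ and all other edges weight $1$. If $|\alpha|>\sqrt{2k-1}$, then $v$ is sedentary.
   Context: For a weighted graph with weighted adjacency matrix $A$, $U(t)=e^{itA}$. A vertex $u$ is sedentary if $\inf_{t>0}|U(t)_{u,u}|\ge C$ for some constant $0<C\le1$. *)

From HB Require Import structures.
From mathcomp Require Import all_boot all_order all_algebra.
From mathcomp Require Import all_classical all_reals all_analysis.
From mathcomp Require Import complex.
Import Order.TTheory GRing.Theory Num.Theory ComplexField.
Import numFieldNormedType.Exports numFieldTopology.Exports.

Set Implicit Arguments.
Unset Strict Implicit.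
Unset Printing Implicit Defensive.

Local Open Scope ring_scope.
Local Open Scope classical_set_scope.

(* m-th power of a square matrix (works for any size n, including n not of the form _.+1) *)
Definition mxpow (T : pzRingType) (n : nat) (M : 'M[T]_n) (m : nat) : 'M[T]_n :=
  iter m (mulmx M) 1%:M.

Definition expmx (R : realType) (n : nat) (M : 'M[R[i]]_n) : 'M[R[i]]_n :=
  \matrix_(a, b)
    lim ((fun N : nat => (\sum_(m < N) (mxpow M m) a b / (m`!)%:R : (R[i])^o)) @ \oo).

Definition transition (R : realType) (n : nat) (A : 'M[R]_n) (t : R) : 'M[R[i]]_n :=
  expmx ((('i * t%:C)%C) *: map_mx (fun x : R => x%:C%C) A).

Definition sedentary (R : realType) (n : nat) (A : 'M[R]_n) (x : 'I_n) : Prop :=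
  exists C : R, 0 < C <= 1 /\
    forall t : R, 0 < t -> (C%:C)%C <= `| transition A t x x |.

Definition cyc_adj (n : nat) (a b : 'I_n) : bool :=
  ((val b == (val a).+1 %% n) || (val a == (val b).+1 %% n))%N.

Definition cycle_weighted (R : realType) (n : nat) (alpha : R) (u v w : 'I_n) : 'M[R]_n :=
  \matrix_(a, b)
    if cyc_adj a b then
      (if [|| (a == u) && (b == v), (a == v) && (b == u),
              (a == v) && (b == w) | (a == w) && (b == v)]
       then alpha^-1 else 1)
    else 0.

From HB Require Import structures.
From mathcomp Require Import all_boot all_order all_algebra.
From mathcomp Require Import all_classical all_reals all_analysis.
From mathcomp Require Import complex zify ring lra.
Import Order.TTheory GRing.Theory Num.Theory ComplexField.
Import numFieldNormedType.Exports numFieldTopology.Exports.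

(* Write the (hermitian) adjacency matrix as A = P^* D P with P unitary.  Then
   U(t)_vv = sum_j |P_jv|^2 e^(i t lambda_j) is a convex combination of unimodular
   numbers, so |U(t)_vv| >= 2 S - 1, where S is the weight carried by the eigenvalue
   0.  For a real kernel vector x with x_v = 1, Cauchy-Schwarz in the eigenbasis gives
   1 = |x_v|^2 <= S |x|^2, hence |U(t)_vv| >= 2 / |x|^2 - 1 for every t.  On the
   weighted cycle C_4k the vector equal to 1 at v, to 0 at odd distance from v and to
   (-1)^(D/2) / alpha at even distance D > 0 is such a kernel vector, with
   |x|^2 = 1 + (2k - 1) / alpha^2; the bound is then the positive constant
   (alpha^2 - (2k - 1)) / (alpha^2 + (2k - 1)) as soon as alpha^2 > 2k - 1. *)

Set Implicit Arguments.
Unset Strict Implicit.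
Unset Printing Implicit Defensive.

Local Open Scope ring_scope.

Lemma mxpow_diag (T : pzRingType) n (d : 'rV[T]_n) m :
  mxpow (diag_mx d) m = diag_mx (\row_j d 0 j ^+ m).
Proof.
elim: m => [|m IH]; first by apply/matrixP => i j; rewrite !mxE expr0.
by rewrite /mxpow iterS -/(mxpow _ m) IH mulmx_diag; congr diag_mx;
   apply/rowP => j; rewrite !mxE exprS.
Qed.

Section Spectral.
Local Open Scope sesquilinear_scope.
Variables (C : numClosedFieldType) (n : nat).
Implicit Types (M P : 'M[C]_n) (x : 'cV[C]_n).

Lemma mxpow_unitary_conj P M m : P \is unitarymx ->
  mxpow (P^t* *m M *m P) m = P^t* *m mxpow M m *m P.
Proof.
move=> PU; elim: m => [|m IH]; first by rewrite /= mulmx1 -[P^t*]mul1mx mulmxKtV.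
by rewrite /mxpow !iterS -!/(mxpow _ m) IH !mulmxA mulmxtVK.
Qed.

Lemma hermitian_spectral_decomp M : M \is hermsymmx ->
  M = (spectralmx M)^t* *m diag_mx (spectral_diag M) *m spectralmx M.
Proof.
move=> HM; have /orthomx_spectralP {1}-> := hermitian_normalmx HM.
by rewrite invmx_unitary // spectral_unitarymx.
Qed.

Lemma mxpow_scale_hermitian_diag M (c : C) m v : M \is hermsymmx ->
  mxpow (c *: M) m v v =
  \sum_j `|spectralmx M j v| ^+ 2 * (c * spectral_diag M 0 j) ^+ m.
Proof.
move=> /hermitian_spectral_decomp {1}->.
rewrite scalemxAl scalemxAr -linearZ /= mxpow_unitary_conj ?spectral_unitarymx //.
rewrite mxpow_diag mxE; apply: eq_bigr => j _.
by rewrite mul_mx_diag !mxE normCK mulrC mulrA.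
Qed.

Lemma sum_spectral_weight M v : \sum_j `|spectralmx M j v| ^+ 2 = 1.
Proof.
have /matrixP/(_ v v) := mulmxKtV (1%:M : 'M[C]_n) (spectral_unitarymx M) erefl.
rewrite mul1mx !mxE eqxx mulr1n => <-.
by apply: eq_bigr => j _; rewrite !mxE normCK mulrC.
Qed.

Lemma spectral_kernel_coord_eq0 M x j : M \is hermsymmx -> M *m x = 0 ->
  spectral_diag M 0 j != 0 -> (spectralmx M *m x) j 0 = 0.
Proof.
move=> HM Mx dj.
have PM : spectralmx M *m M = diag_mx (spectral_diag M) *m spectralmx M.
  rewrite {2}(hermitian_spectral_decomp HM) !mulmxA.
  by move/unitarymxP: (spectral_unitarymx M) => ->; rewrite mul1mx.
have /matrixP/(_ j 0) : diag_mx (spectral_diag M) *m (spectralmx M *m x) = 0.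
  by rewrite mulmxA -PM -mulmxA Mx mulmx0.
by rewrite mul_diag_mx !mxE => /eqP; rewrite mulf_eq0 (negPf dj) => /eqP.
Qed.

Lemma unitary_sum_sqr_norm P x : P \is unitarymx ->
  \sum_i `|(P *m x) i 0| ^+ 2 = \sum_i `|x i 0| ^+ 2.
Proof.
move=> PU; set y := P *m x.
have /matrixP/(_ 0 0) : y^t* *m y = x^t* *m x.
  by rewrite trmx_mul map_mxM -mulmxA [P^t* *m _]mulmxA -[P^t*]mul1mx mulmxKtV // mul1mx.
rewrite !mxE => E; transitivity (\sum_i y^t* 0 i * y i 0).
  by apply: eq_bigr => i _; rewrite !mxE normCK mulrC.
by rewrite E; apply: eq_bigr => i _; rewrite !mxE normCK mulrC.
Qed.

Lemma hermitian_kernel_coord_bound M x v : M \is hermsymmx -> M *m x = 0 ->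
  `|x v 0| ^+ 2 <=
  (\sum_(j | spectral_diag M 0 j == 0) `|spectralmx M j v| ^+ 2) *
  \sum_i `|x i 0| ^+ 2.
Proof.
move=> HM Mx; have PU := spectral_unitarymx M.
set P := spectralmx M in PU *; set d := spectral_diag M.
pose a := \row_j (if d 0 j == 0 then P j v else 0).
pose b := \row_j (P *m x) j 0.
have ba : dotmx b a = x v 0.
  rewrite -[x]mul1mx -(mulmxKtV 1%:M PU) // mul1mx -mulmxA.
  rewrite dotmxE !mxE; apply: eq_bigr => j _; rewrite !mxE.
  case: eqP => [_|/eqP dj]; first by rewrite mulrC.
  have := spectral_kernel_coord_eq0 HM Mx dj; rewrite mxE => ->.
  by rewrite conjC0 !mulr0.
have aa : dotmx a a = \sum_(j | d 0 j == 0) `|P j v| ^+ 2.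
  rewrite dotmxE mxE [RHS]big_mkcond /=; apply: eq_bigr => j _; rewrite !mxE.
  by case: eqP => _; rewrite ?mul0r // normCK.
have bb : dotmx b b = \sum_i `|x i 0| ^+ 2.
  rewrite dotmxE mxE -(unitary_sum_sqr_norm x PU).
  by apply: eq_bigr => j _; rewrite !mxE normCK.
by rewrite -ba -aa -bb mulrC; exact: (CauchySchwarz (@dotmx C n) b a).1.
Qed.
End Spectral.

Lemma norm_sum_unimodular_ge (C : numDomainType) (I : finType) (P : pred I)
    (w e : I -> C) :
  (forall j, 0 <= w j) -> \sum_j w j = 1 ->
  (forall j, `|e j| = 1) -> (forall j, P j -> e j = 1) ->
  2 * (\sum_(j | P j) w j) - 1 <= `|\sum_j w j * e j|.
Proof.
move=> w_ge0 w1 e1 eP; rewrite (bigID P) /= in w1.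
rewrite [X in `|X|](bigID P) /=.
have -> : \sum_(j | P j) w j * e j = \sum_(j | P j) w j.
  by apply: eq_bigr => j /eP ->; rewrite mulr1.
have tail_le : `|\sum_(j | ~~ P j) w j * e j| <= \sum_(j | ~~ P j) w j.
  apply: (le_trans (ler_norm_sum _ _ _)); apply: ler_sum => j _.
  by rewrite normrM e1 mulr1 ger0_norm.
apply: le_trans (lerB_normD _ _).
rewrite ger0_norm ?sumr_ge0 // mulr2n mulrDl mul1r -addrA lerD2l.
by rewrite -w1 opprD addrA subrr add0r lerN2.
Qed.

Section ComplexExponential.
Local Open Scope classical_set_scope.
Local Open Scope complex_scope.
Variable R : realType.

Lemma normc_real (r : R) : `|r%:C| = `|r|%:C.
Proof. by rewrite normc_def /= expr0n addr0 sqrtr_sqr. Qed.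

Lemma cvg_real_complex (a : nat -> R) (l : R) : a n @[n --> \oo] --> l ->
  ((a n)%:C : R[i]^o) @[n --> \oo] --> (l%:C : R[i]^o).
Proof.
move=> /cvgrPdist_lt al; apply/cvgrPdist_lt => e e_gt0.
have /andP[/eqP Im_e Re_e_gt0] : (complex.Im e == 0) && (0 < complex.Re e).
  by move: e_gt0; rewrite ltcE.
have -> : e = (complex.Re e)%:C by move: Im_e; case: e {e_gt0 Re_e_gt0} => ? ? /= ->.
near=> N; rewrite -rmorphB normc_real ltcR.
by near: N; exact: al.
Unshelve. all: by end_near.
Qed.

Definition expi (th : R) : R[i] := (cos th)%:C + 'i * (sin th)%:C.

Lemma expi0 : expi 0 = 1.
Proof. by rewrite /expi cos0 sin0 mulr0 addr0. Qed.

Lemma norm_expi (th : R) : `|expi th| = 1.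
Proof.
rewrite normc_def /expi /= !mul0r !mul1r !subr0 !add0r !addr0 cos2Dsin2.
by rewrite sqrtr1.
Qed.

Lemma expi_series_term (th : R) m : ('i * th%:C) ^+ m / m`!%:R =
  (cos_coeff th m)%:C + 'i * (sin_coeff th m)%:C.
Proof.
have i2 q : ('i : R[i]) ^+ q.*2 = ((-1) ^+ q)%:C.
  by rewrite -muln2 mulnC exprM sqr_i rmorphXn rmorphN1.
rewrite /cos_coeff /sin_coeff exprMn -[m]odd_double_half.
case: (odd m) => /=.
  rewrite add1n /= odd_double uphalf_double doubleK exprS i2.
  by rewrite !mul0r rmorph0 add0r !mul1r !rmorphM fmorphV rmorph_nat !rmorphXn !mulrA.
rewrite !add0n odd_double doubleK i2.
by rewrite !mul0r rmorph0 mulr0 addr0 !mul1r !rmorphM fmorphV rmorph_nat !rmorphXn.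
Qed.

Lemma cvg_expi_series (th : R) :
  (\sum_(m < N) ('i * th%:C) ^+ m / m`!%:R : R[i]^o) @[N --> \oo] -->
  (expi th : R[i]^o).
Proof.
have -> : (fun N => \sum_(m < N) ('i * th%:C) ^+ m / m`!%:R : R[i]^o) =
    fun N => (series (cos_coeff th) N)%:C + 'i * (series (sin_coeff th) N)%:C.
  apply/funext => N; rewrite /series /= !big_mkord.
  under eq_bigr do rewrite expi_series_term.
  by rewrite big_split /= -mulr_sumr !rmorph_sum.
apply: cvgD; last apply: cvgMr; apply: cvg_real_complex; rewrite unlock.
- exact: is_cvg_series_cos_coeff.
- exact: is_cvg_series_sin_coeff.
Qed.

Lemma expmx_iscale_hermitian_diag n (M : 'M[R[i]]_n) (t : R) v :
  M \is hermsymmx ->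
  expmx (('i * t%:C) *: M) v v =
  \sum_j `|spectralmx M j v| ^+ 2 * expi (t * complex.Re (spectral_diag M 0 j)).
Proof.
move=> HM; rewrite /expmx mxE; apply: (@cvg_lim _ (@norm_hausdorff _ (R[i])^o)).
set P := spectralmx M; set d := spectral_diag M.
have d_real j : d 0 j \is Num.real.
  by have /mxOverP := hermitian_spectral_diag_real HM; apply.
have -> : (fun N => \sum_(m < N) mxpow (('i * t%:C) *: M) m v v / m`!%:R : R[i]^o) =
    fun N => \sum_j `|P j v| ^+ 2 *
      \sum_(m < N) ('i * (t * complex.Re (d 0 j))%:C) ^+ m / m`!%:R.
  apply/funext => N; under [RHS]eq_bigr do rewrite mulr_sumr.
  rewrite [RHS]exchange_big; apply: eq_bigr => m _.
  rewrite mxpow_scale_hermitian_diag // mulr_suml; apply: eq_bigr => j _.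
  by rewrite -/P -/d -{1}(RRe_real (d_real j)) -mulrA -rmorphM mulrA.
apply: cvg_big => [|j _]; first exact: add_continuous.
apply: cvgMr; exact: cvg_expi_series.
Qed.

Lemma transition_diag_ge_kernel n (A : 'M[R]_n) (x : 'cV[R]_n) v t :
  A^T = A -> A *m x = 0 -> x v 0 = 1 ->
  (2 / (\sum_i x i 0 ^+ 2) - 1)%:C <= `|transition A t v v|.
Proof.
move=> A_sym Ax xv1; set N := \sum_i x i 0 ^+ 2.
set M := map_mx (fun r : R => r%:C) A; set xC := map_mx (fun r : R => r%:C) x.
have HM : M \is hermsymmx.
  apply/is_hermitianmxP; rewrite expr0 scale1r; apply/matrixP => a b.
  by rewrite !mxE [RHS](conjc_real (A b a)) -{1}A_sym mxE.
have MxC : M *m xC = 0 by rewrite -map_mxM Ax map_mx0.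
have N_gt0 : 0 < N.
  rewrite /N (bigD1 v) //= xv1 expr1n; apply: lt_le_trans ltr01 _.
  by rewrite lerDl sumr_ge0 // => i _; exact: sqr_ge0.
set P := spectralmx M; set d := spectral_diag M.
set S := \sum_(j | d 0 j == 0) `|P j v| ^+ 2.
have S_ge : N%:C^-1 <= S.
  have := hermitian_kernel_coord_bound v HM MxC; rewrite mxE xv1 normr1 expr1n.
  have -> : \sum_i `|xC i 0| ^+ 2 = N%:C.
    rewrite rmorph_sum; apply: eq_bigr => i _.
    by rewrite mxE normc_real -rmorphXn real_normK ?num_real.
  by rewrite -ler_pdivrMr ?ltcR // mul1r.
rewrite /transition -/M expmx_iscale_hermitian_diag //.
apply: le_trans (norm_sum_unimodular_ge (P := fun j => d 0 j == 0) _ _ _ _) => //.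
- rewrite rmorphB rmorphM fmorphV rmorph_nat rmorph1 lerD2r.
  by rewrite ler_pM2l ?ltr0n.
- exact: sum_spectral_weight.
- by move=> j; rewrite norm_expi.
- by move=> j /eqP ->; rewrite /= mulr0 expi0.
Qed.
End ComplexExponential.

Section CyclicOrdinal.
Variable n : nat.
Implicit Types a b c : 'I_n.

Lemma val_ordS a : ordS a = (if a.+1 == n then 0 else a.+1) :> nat.
Proof.
have := ltn_ord a; rewrite /=; case: eqP => [->|ne] lt_an; first by rewrite modnn.
by rewrite modn_small //; lia.
Qed.

Lemma val_ord_pred a : ord_pred a = (if a == 0 :> nat then n.-1 else a.-1) :> nat.
Proof.
have := ltn_ord a; rewrite /=; case: eqP => [->|ne] lt_an.
  by rewrite add0n modn_small //; lia.
by rewrite (_ : (a + n).-1 = a.-1 + n)%N ?modnDr ?modn_small //; lia.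
Qed.

Lemma cyc_adjE a b : cyc_adj a b = (b == ordS a) || (b == ord_pred a).
Proof.
rewrite /cyc_adj; congr orb.
by rewrite -[val a == _]/(a == ordS b) eq_sym (can2_eq (@ordSK n) (@ord_predK n)).
Qed.

Lemma cyc_adj_sym a b : cyc_adj a b = cyc_adj b a.
Proof. by rewrite /cyc_adj orbC. Qed.

Lemma cyc_adj_mid a b c d :
  cyc_adj a b -> cyc_adj b c -> a != c -> cyc_adj b d -> (d == a) || (d == c).
Proof.
rewrite cyc_adj_sym !cyc_adjE.
move=> /orP[]/eqP-> /orP[]/eqP-> ac /orP[]/eqP->; rewrite ?eqxx ?orbT //.
all: by rewrite eqxx in ac.
Qed.

Lemma ordS_neq_ord_pred a : (2 < n)%N -> ordS a != ord_pred a.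
Proof.
move=> n_gt2; apply/eqP => /(congr1 (@nat_of_ord n)); rewrite val_ordS val_ord_pred.
by have := ltn_ord a; case: eqP; case: eqP; lia.
Qed.

Lemma sum_cyc_adj (T : pzSemiRingType) (A : 'M[T]_n) (x : 'I_n -> T) a :
  (2 < n)%N -> (forall b, ~~ cyc_adj a b -> A a b = 0) ->
  \sum_b A a b * x b = A a (ordS a) * x (ordS a) + A a (ord_pred a) * x (ord_pred a).
Proof.
move=> n_gt2 A0; rewrite (bigD1 (ordS a)) //= (bigD1 (ord_pred a)) /=; last first.
  by rewrite eq_sym ordS_neq_ord_pred.
rewrite big1 ?addr0 // => b /andP[ba1 ba2]; rewrite A0 ?mul0r //.
by rewrite cyc_adjE negb_or ba1 ba2.
Qed.

Fact cyc_dist_subproof a b :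
  ((if (a <= b)%N then b - a else b + n - a) < n)%N.
Proof. by have := ltn_ord a; have := ltn_ord b; case: ifP; lia. Qed.

Definition cyc_dist a b : 'I_n := Ordinal (cyc_dist_subproof a b).

Lemma val_cyc_dist a b :
  cyc_dist a b = (if a <= b then b - a else b + n - a)%N :> nat.
Proof. by []. Qed.

Lemma cyc_dist_eq0 a b : (cyc_dist a b == 0 :> nat) = (b == a).
Proof.
rewrite val_cyc_dist -val_eqE /=.
by have := ltn_ord a; have := ltn_ord b; case: ifP; lia.
Qed.

Lemma cyc_dist_inj a : injective (cyc_dist a).
Proof.
move=> b c /(congr1 (@nat_of_ord n)); rewrite !val_cyc_dist => dist_bc.
apply: ord_inj; move: dist_bc.
by have := ltn_ord a; have := ltn_ord b; have := ltn_ord c; do 2!case: ifP; lia.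
Qed.

Lemma cyc_dist_ordS a b : cyc_dist a (ordS b) = ordS (cyc_dist a b).
Proof.
apply: ord_inj; rewrite !val_cyc_dist !val_ordS !val_cyc_dist.
by have := ltn_ord a; have := ltn_ord b; repeat case: ifP; lia.
Qed.

Lemma cyc_dist_ord_pred a b : cyc_dist a (ord_pred b) = ord_pred (cyc_dist a b).
Proof.
apply: ord_inj; rewrite !val_cyc_dist !val_ord_pred !val_cyc_dist.
by have := ltn_ord a; have := ltn_ord b; repeat case: ifP; lia.
Qed.
End CyclicOrdinal.

Section CycleKernelCoord.
Variables (F : fieldType) (alpha : F).

Definition cycle_kernel_coord (D : nat) : F :=
  if D == 0 then 1 else if odd D then 0 else (-1) ^+ D./2 / alpha.

(* The weight of the edge joining the vertices at distances D and E from v. *)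
Definition cycle_edge_weight (D E : nat) : F :=
  if (D == 0) || (E == 0) then alpha^-1 else 1.

Local Notation f := cycle_kernel_coord.
Local Notation wt := cycle_edge_weight.

Lemma cycle_kernel_coord_odd D : odd D -> f D = 0.
Proof. by rewrite /f; case: eqP => [->|_ ->]. Qed.

Lemma cycle_kernel_coord_double h : h != 0 -> f h.*2 = (-1) ^+ h / alpha.
Proof. by rewrite /f odd_double doubleK double_eq0 => /negPf->. Qed.

Lemma weighted_cycle_kernel_coord_even D E : D != 0 -> ~~ odd E ->
  wt D E * f E = (-1) ^+ E./2 / alpha.
Proof.
rewrite /wt /f => /negPf-> /negPf->; case: eqP => [->|_]; last by rewrite mul1r.
by rewrite mulr1 expr0 mul1r.
Qed.

Variable k : nat.
Hypothesis k_gt0 : (0 < k)%N.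
Local Notation n := (4 * k)%N.

Lemma cycle_kernel_coord_balance (D : 'I_n) :
  wt D (ordS D) * f (ordS D) + wt D (ord_pred D) * f (ord_pred D) = 0.
Proof.
rewrite val_ordS val_ord_pred; case: D => D D_lt /=.
have [[h ->]|[h ->]] : ({h | D = h.*2} + {h | D = h.*2.+1})%type.
- rewrite -[D]odd_double_half; case: (odd D); [right|left]; by exists D./2.
- have -> : (h.*2.+1 == n) = false by lia.
  rewrite [f h.*2.+1]cycle_kernel_coord_odd /= ?odd_double // mulr0 add0r.
  rewrite cycle_kernel_coord_odd ?mulr0 //.
  case: eqP => [_|h_gt0].
    by rewrite (_ : n.-1 = k.*2.-1.*2.+1) /= ?odd_double //; lia.
  by rewrite (_ : h.*2.-1 = h.-1.*2.+1) /= ?odd_double //; lia.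
- rewrite !weighted_cycle_kernel_coord_even ?odd_double //=; last first.
    by case: eqP => //= _; rewrite odd_double.
  (* The two neighbours of an odd D carry opposite signs; across the
     wrap-around D.+1 = n this is where 4 | n is used. *)
  rewrite doubleK -mulrDl; case: eqP => [h_eq|_].
    rewrite (_ : h = k.-1.*2.+1) /=; last by lia.
    by rewrite expr0 -signr_odd /= odd_double /= expr1 addrN mul0r.
  by rewrite -doubleS doubleK exprS mulN1r addNr mul0r.
Qed.

Lemma sum_cycle_kernel_coord_sqr_double m : (0 < m)%N ->
  \sum_(0 <= D < m.*2) f D ^+ 2 = 1 + (m%:R - 1) / alpha ^+ 2.
Proof.
elim: m => [//|m IH] _; rewrite doubleS !big_nat_recr //=.
rewrite [f m.*2.+1]cycle_kernel_coord_odd /= ?odd_double // (expr2 0) mul0r addr0.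
have [->|m_gt0] := posnP m.
  by rewrite big_geq // /f /= add0r expr1n subrr mul0r addr0.
rewrite IH // cycle_kernel_coord_double -?lt0n // exprMn exprAC sqrrN !expr1n mul1r.
rewrite -natr1 exprVn; ring.
Qed.

Lemma sum_cycle_kernel_coord_sqr :
  \sum_(D < n) f D ^+ 2 = 1 + (2 * k%:R - 1) / alpha ^+ 2.
Proof.
rewrite -(big_mkord xpredT (fun D => f D ^+ 2)) (_ : n = k.*2.*2); last by lia.
by rewrite sum_cycle_kernel_coord_sqr_double -?mul2n ?natrM //; lia.
Qed.
End CycleKernelCoord.

Definition cycle_kernel_vector (F : fieldType) n (alpha : F) (v : 'I_n) : 'cV[F]_n :=
  \col_b cycle_kernel_coord alpha (cyc_dist v b).

Lemma tr_cycle_weighted (R : realType) n (alpha : R) (u v w : 'I_n) :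
  (cycle_weighted alpha u v w)^T = cycle_weighted alpha u v w.
Proof.
apply/matrixP => a b; rewrite !mxE cyc_adj_sym; case: cyc_adj => //.
by case: (a == u); case: (a == v); case: (a == w);
   case: (b == u); case: (b == v); case: (b == w).
Qed.

Section CycleWeighted.
Variables (R : realType) (k : nat) (alpha : R) (u v w : 'I_(4 * k)).
Hypotheses (k_gt0 : (0 < k)%N) (uv : cyc_adj u v) (vw : cyc_adj v w) (uw : u != w).
Local Notation A := (cycle_weighted alpha u v w).
Local Notation x := (cycle_kernel_vector alpha v).

Lemma cycle_weighted_adj a b : cyc_adj a b ->
  A a b = if (a == v) || (b == v) then alpha^-1 else 1.
Proof.
move=> ab; rewrite mxE ab.
have [av|av] := eqVneq a v.
  rewrite av in ab *.
  by case/orP: (cyc_adj_mid uv vw uw ab) => /eqP->; rewrite !eqxx ?orbT.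
have [bv|bv] := eqVneq b v; last by rewrite !andbF.
rewrite bv cyc_adj_sym in ab *.
by case/orP: (cyc_adj_mid uv vw uw ab) => /eqP->; rewrite !eqxx ?orbT ?andbT.
Qed.

Lemma cycle_weighted_kernel : A *m x = 0.
Proof.
apply/matrixP => a j; rewrite [LHS]mxE [RHS]mxE (sum_cyc_adj (fun b => x b j)); last 2 first.
- by lia.
- by move=> b /negPf ab; rewrite mxE ab.
rewrite !cycle_weighted_adj ?cyc_adjE ?eqxx ?orbT // !mxE.
rewrite -!cyc_dist_eq0 cyc_dist_ordS cyc_dist_ord_pred.
exact: cycle_kernel_coord_balance.
Qed.

Lemma cycle_kernel_vector_self : x v 0 = 1.
Proof. by rewrite mxE /cycle_kernel_coord cyc_dist_eq0 eqxx. Qed.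

Lemma sum_cycle_kernel_vector_sqr :
  \sum_i x i 0 ^+ 2 = 1 + (2 * k%:R - 1) / alpha ^+ 2.
Proof.
rewrite -(sum_cycle_kernel_coord_sqr alpha k_gt0) [RHS](reindex_inj (@cyc_dist_inj _ v)).
by apply: eq_bigr => b _; rewrite mxE.
Qed.
End CycleWeighted.

Theorem proposition46 (R : realType) (k : nat) (alpha : R) (u v w : 'I_(4 * k)) :
  (1 <= k)%N -> alpha != 0 ->
  cyc_adj u v -> cyc_adj v w -> u != w ->
  Num.sqrt (2 * k%:R - 1) < `|alpha| ->
  sedentary (cycle_weighted alpha u v w) v.
Proof.
move=> k_gt0 alpha_neq0 uv vw uw alpha_gt.
set q := 2 * k%:R - 1 in alpha_gt *.
have q_ge1 : 1 <= q.
  have : 1 <= k%:R :> R by rewrite ler1n.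
  rewrite /q; lra.
have alpha2_gt0 : 0 < alpha ^+ 2 by rewrite exprn_even_gt0.
have q_lt : q < alpha ^+ 2 by rewrite -sqrtr_sqr ltr_sqrt // in alpha_gt.
exists ((alpha ^+ 2 - q) / (alpha ^+ 2 + q)); split.
  by apply/andP; split; [apply: divr_gt0 | rewrite ler_pdivrMr]; lra.
move=> t _; apply: le_trans (transition_diag_ge_kernel t (tr_cycle_weighted alpha u v w)
  (cycle_weighted_kernel alpha k_gt0 uv vw uw) (cycle_kernel_vector_self alpha v)).
rewrite sum_cycle_kernel_vector_sqr // lecR -/q.
suff -> : 2 / (1 + q / alpha ^+ 2) - 1 = (alpha ^+ 2 - q) / (alpha ^+ 2 + q) by [].
by field; rewrite alpha_neq0 lt0r_neq0 //; lra.
Qed.
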